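(* Let $G$ be a looped simple graph, let $B$ be a transversal of $W(G)$ that is a basis of $M[IAS(G)]$, and let $C$ be a transversal with $B\cap C=\emptyset$. For $v\in V(G)$ let $B(v)$ and $C(v)$ denote the elements of $\tau_G(v)$ lying in $B$ and in $C$, respectively. Let $H$ be a looped simple graph with $V(H)=V(G)$ in which two distinct vertices $v,w$ are adjacent if and only if $B(w)$ belongs to the fundamental circuit of $C(v)$ with respect to $B$ in $M[IAS(G)]$. Then $H$ is well defined (this relation is symmetric in $v,w$), $H$ is locally equivalent to $G$, and there is an induced isomorphism $\beta:M[IAS(G)]\to M[IAS(H)]$ with $\beta(B)=\Phi(H)=\{\phi_H(v):v\in V(H)\}$.
   Context: A looped simple graph is a finite graph in which each vertex carries at most one loop and no two distinct vertices are joined by more than one edge. ''Adjacent''/''neighbors'' refer only to distinct vertices joined by a non-loop edge; $N_G(v)$ is the set of neighbors of $v$. $A(G)$ is the $V(G)\times V(G)$ matrix over $GF(2)$ with diagonal entry $1$ exactly at looped vertices and off-diagonal entry $1$ exactly for adjacent pairs. $IAS(G)=(I\mid A(G)\mid A(G)+I)$ over $GF(2)$, rows indexed by $V(G)$; the $v$-columns of the three blocks are labelled $\phi_G(v),\chi_G(v),\psi_G(v)$. $M[IAS(G)]$ is the binary column matroid of $IAS(G)$ on $W(G)=\{\phi_G(v),\chi_G(v),\psi_G(v):v\in V(G)\}$. The vertex triple of $v$ is $\tau_G(v)=\{\phi_G(v),\chi_G(v),\psi_G(v)\}$; a transversal meets each vertex triple in exactly one element. For a basis $B$ and element $e\notin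 B$, the fundamental circuit of $e$ with respect to $B$ is the unique circuit contained in $B\cup\{e\}$. Local equivalence: $G_\ell^v$ complements the loop status of $v$; $G_s^v$ complements the adjacency status of every pair of distinct neighbors of $v$; $G_{ns}^v$ does this and also complements the loop status of every neighbor of $v$. $H$ is locally equivalent to $G$ if obtained from $G$ by a finite sequence of such operations. Induced isomorphisms: for each such operation producing $G'$ from $G$ there is a matroid isomorphism $M[IAS(G)]\to M[IAS(G')]$ sending $\alpha_G(x)\mapsto\alpha_{G'}(x)$ for all $\alpha\in\{\phi,\chi,\psi\}$, $x\in V(G)$, except: for $G'=G_\ell^v$, $\chi_G(v)\mapsto\psi_{G'}(v)$, $\psi_G(v)\mapsto\chi_{G'}(v)$; for $G'=G_{ns}^v$ with $v$ unlooped, $\phi_G(v)\mapsto\psi_{G'}(v)$, $\psi_G(v)\mapsto\phi_{G'}(v)$, and with $v$ looped, $\phi_G(v)\mapsto\chi_{G'}(v)$, $\chi_G(v)\mapsto\phi_{G'}(v)$; for $G'=G_s^v$, the same exchange at $v$ as for $G_{ns}^v$ and in addition, for every $w\in N_G(v)$, $\chi_G(w)\mapsto\psi_{G'}(w)$, $\psi_G(w)\mapsto\chi_{G'}(w)$. An induced isomorphism $M[IAS(G)]\to M[IAS(H)]$ is a composition of such isomorphisms along a sequence of operations transforming $G$ into $H$. *)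

From mathcomp Require Import all_boot.
Set Implicit Arguments. Unset Strict Implicit. Unset Printing Implicit Defensive.

(* A looped simple graph on the finite vertex type V is encoded as a boolean
   relation G : V -> V -> bool, assumed symmetric (in the theorem):
   G v v = true  iff v carries a loop,
   G v w = true (v <> w) iff v and w are adjacent.
   Thus G is exactly the matrix A(G) over GF(2) = bool. *)

Section Defs.
Variable V : finType.

Definition tphi : 'I_3 := @Ordinal 3 0 isT.
Definition tchi : 'I_3 := @Ordinal 3 1 isT.
Definition tpsi : 'I_3 := @Ordinal 3 2 isT.

(* Elements of W(G): (v, t) is phi_G(v), chi_G(v) or psi_G(v). *)
Definition elt := (V * 'I_3)%type.

Definition nbr (G : V -> V -> bool) (v : V) : {set V} :=
  [set w | (w != v) && G v w].

(* Column of IAS(G) labelled by x, as a vector V -> GF(2) (GF(2) = bool, + = xor). *)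
Definition iascol (G : V -> V -> bool) (x : elt) (u : V) : bool :=
  let: (v, t) := x in
  if t == tphi then u == v
  else if t == tchi then G u v
  else G u v (+) (u == v).

(* Over GF(2), a set of columns is linearly dependent iff a nonempty subset
   of them sums to zero. *)
Definition dependent (G : V -> V -> bool) (T : {set elt}) : Prop :=
  exists D : {set elt}, [/\ D \subset T, D != set0 &
     forall u : V, \big[addb/false]_(x in D) iascol G x u = false].

Definition independent G (T : {set elt}) : Prop := ~ dependent G T.

Definition is_basis G (B : {set elt}) : Prop :=
  independent G B /\ forall x, x \notin B -> dependent G (x |: B).

Definition circuit G (D : {set elt}) : Prop :=
  dependent G D /\ forall D' : {set elt}, D' \proper D -> independent G D'.

Definition in_fund G (B : {set elt}) (e x : elt) : Prop :=
  exists D : {set elt}, [/\ circuit G D, D \subset e |: B & x \in D].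

Definition transv (f : V -> 'I_3) : {set elt} := [set (v, f v) | v : V].

Definition Phi : {set elt} := [set (v, tphi) | v : V].

Inductive op := Oloop of V | Os of V | Ons of V.

Definition apply_op (o : op) (G : V -> V -> bool) : V -> V -> bool :=
  match o with
  | Oloop v => fun x y => if (x == v) && (y == v) then ~~ G x y else G x y
  | Os v => fun x y => if [&& x != y, x \in nbr G v & y \in nbr G v]
                      then ~~ G x y else G x y
  | Ons v => fun x y => if (x \in nbr G v) && (y \in nbr G v)
                       then ~~ G x y else G x y
  end.

Fixpoint apply_ops (s : seq op) (G : V -> V -> bool) : V -> V -> bool :=
  match s with [::] => G | o :: s' => apply_ops s' (apply_op o G) end.

Definition swapt (a b t : 'I_3) : 'I_3 :=
  if t == a then b else if t == b then a else t.

(* Element map of the isomorphism M[IAS(G)] -> M[IAS(G')] induced by one operation. *)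
Definition op_map (o : op) (G : V -> V -> bool) (x : elt) : elt :=
  let: (w, t) := x in
  match o with
  | Oloop v => if w == v then (w, swapt tchi tpsi t) else (w, t)
  | Ons v => if w == v then
               (if G v v then (w, swapt tphi tchi t) else (w, swapt tphi tpsi t))
             else (w, t)
  | Os v => if w == v then
               (if G v v then (w, swapt tphi tchi t) else (w, swapt tphi tpsi t))
             else if w \in nbr G v then (w, swapt tchi tpsi t) else (w, t)
  end.

Fixpoint induced (s : seq op) (G : V -> V -> bool) (x : elt) : elt :=
  match s with
  | [::] => x
  | o :: s' => induced s' (apply_op o G) (op_map o G x)
  end.

End Defs.

From mathcomp Require Import all_boot.
Set Implicit Arguments. Unset Strict Implicit. Unset Printing Implicit Defensive.

(* Local complementation at v (G_ns^v) acts on the columns of IAS(G) as the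
   row operation "add row v to the rows of N(v)", so its induced isomorphism
   preserves dependence, bases and fundamental circuits.  When B = Phi, the
   fundamental circuit of C(v) is C(v) together with the phi(w) in the support
   of its column, so for w != v it contains phi(w) iff v and w are adjacent:
   the fundamental graph is then G itself, up to loops.  It therefore suffices
   to move B onto Phi by local complementations, by induction on the number of
   vertices v with B(v) != phi(v), and to fix the loops at the end by loop
   toggles, which do not move Phi. *)

Section FundamentalCircuits.
Variable V : finType.
Implicit Types (G : V -> V -> bool) (B D S : {set elt V}) (e x : elt V).

Definition zero_sum G D := forall u, \big[addb/false]_(x in D) iascol G x u = false.

Lemma big_addb_symdiff (F : elt V -> bool) S1 S2 :
  \big[addb/false]_(x in (S1 :\: S2) :|: (S2 :\: S1)) F x =
  (\big[addb/false]_(x in S1) F x) (+) (\big[addb/false]_(x in S2) F x).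
Proof.
rewrite (big_setID S1) (big_setID S2 (A := S1)) (big_setID S1 (A := S2)).
have -> : (S1 :\: S2 :|: S2 :\: S1) :&: S1 = S1 :\: S2.
  by apply/setP => x; rewrite !inE; case: (x \in S1); case: (x \in S2).
have -> : (S1 :\: S2 :|: S2 :\: S1) :\: S1 = S2 :\: S1.
  by apply/setP => x; rewrite !inE; case: (x \in S1); case: (x \in S2).
rewrite setIC.
by case: (\big[addb/false]_(i in S1 :\: S2) F i);
   case: (\big[addb/false]_(i in S2 :\: S1) F i);
   case: (\big[addb/false]_(i in S2 :&: S1) F i).
Qed.

Lemma subset_setU1_notin e D B : D \subset e |: B -> e \notin D -> D \subset B.
Proof.
move=> /subsetP DeB eD; apply/subsetP => y yD.
by case/setU1P: (DeB y yD) => // ey; rewrite -ey yD in eD.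
Qed.

Lemma zero_sum_dependent G D : D != set0 -> zero_sum G D -> dependent G D.
Proof. by exists D. Qed.

(* Two zero sums e + S1 = 0 = e + S2 over B give the zero sum S1 + S2 of the
   symmetric difference, which independence forces to be empty. *)
Lemma zero_sum_setU1_unique G B e S1 S2 : independent G B ->
  S1 \subset B -> S2 \subset B -> e \notin S1 -> e \notin S2 ->
  zero_sum G (e |: S1) -> zero_sum G (e |: S2) -> S1 = S2.
Proof.
move=> indB S1B S2B eS1 eS2 z1 z2.
have [|ne] := eqVneq ((S1 :\: S2) :|: (S2 :\: S1)) set0.
  by move/eqP; rewrite setU_eq0 !setD_eq0 => /andP[? ?]; apply/eqP; rewrite eqEsubset; apply/andP.
exfalso; apply: indB; exists ((S1 :\: S2) :|: (S2 :\: S1)); split => //.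
  by rewrite subUset !(subset_trans (subsetDl _ _)).
move=> u; rewrite big_addb_symdiff.
move: (z1 u) (z2 u); rewrite !big_setU1 //.
by case: (iascol G e u); case: (\big[addb/false]_(x in S1) iascol G x u);
   case: (\big[addb/false]_(x in S2) iascol G x u).
Qed.

Section Representation.
Variables (G : V -> V -> bool) (B S : {set elt V}) (e : elt V).
Hypotheses (indB : independent G B) (eB : e \notin B) (SB : S \subset B).
Hypothesis zS : zero_sum G (e |: S).

Let eS : e \notin S.
Proof. by apply: contra eB; apply: (subsetP SB). Qed.

Lemma zero_sum_setU1_eq D : D \subset e |: B -> D != set0 -> zero_sum G D ->
  D = e |: S.
Proof.
move=> DeB D0 zD.
have eD : e \in D.
  apply: contraT => eD; case: indB.
  by exists D; split => //; apply: subset_setU1_notin DeB eD.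
rewrite -(setD1K eD); congr (_ |: _).
apply: (zero_sum_setU1_unique indB) => //; rewrite ?setD1K ?setD11 //.
by apply: subset_setU1_notin (subset_trans (subD1set _ _) DeB) _; rewrite setD11.
Qed.

Lemma in_fundP x : in_fund G B e x <-> x \in e |: S.
Proof.
split.
- move=> [D [[[D0 [D0D D00 zD0]] minD] DeB xD]].
  have D0E : D0 = D.
    have [//|neD] := eqVneq D0 D.
    by case: (minD D0); [rewrite properEneq neD | exists D0].
  by rewrite -(@zero_sum_setU1_eq D) // -D0E.
- move=> xS; exists (e |: S); split => //; last exact: setUS.
  split; first by apply: zero_sum_dependent => //; apply/set0Pn; exists e; rewrite setU11.
  move=> D' D'S [D0 [D0D' D00 zD0]].
  have D0S := subset_trans D0D' (proper_sub D'S).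
  have := @zero_sum_setU1_eq D0 (subset_trans D0S (setUS _ SB)) D00 zD0.
  by move=> D0E; move: D'S; rewrite -D0E properE D0D' andbF.
Qed.

End Representation.

Lemma basis_zero_sum_setU1 G B e : is_basis G B -> e \notin B ->
  exists2 S : {set elt V}, S \subset B & zero_sum G (e |: S).
Proof.
move=> [indB maxB] eB; have [D [DeB D0 zD]] := maxB e eB.
have eD : e \in D.
  by apply: contraT => eD; case: indB; exists D; split => //; apply: subset_setU1_notin DeB eD.
exists (D :\ e); last by rewrite setD1K.
by apply: subset_setU1_notin (subset_trans (subD1set _ _) DeB) _; rewrite setD11.
Qed.

End FundamentalCircuits.

Lemma I3_cases (t : 'I_3) : [\/ t = tphi, t = tchi | t = tpsi].
Proof.
case: t => [[|[|[|k]]] Ht] //.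
- by constructor 1; apply: val_inj.
- by constructor 2; apply: val_inj.
- by constructor 3; apply: val_inj.
Qed.

Lemma swaptK a b : involutive (swapt a b).
Proof.
move=> t; rewrite /swapt; have [->|ta] := eqVneq t a; rewrite ?eqxx.
  by have [->|ba] := eqVneq b a; rewrite ?eqxx.
have [->|tb] := eqVneq t b; rewrite ?eqxx //.
by rewrite (negbTE ta) (negbTE tb).
Qed.

Lemma apply_op_sym (V : finType) (o : op V) (G : V -> V -> bool) :
  (forall x y, G x y = G y x) -> forall x y, apply_op o G x y = apply_op o G y x.
Proof.
move=> Gsym x y; case: o => v /=; rewrite Gsym.
- by rewrite andbC.
- by rewrite (eq_sym x) (andbC (x \in _)).
- by rewrite andbC.
Qed.

Lemma apply_ops_sym (V : finType) (s : seq (op V)) (G : V -> V -> bool) :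
  (forall x y, G x y = G y x) -> forall x y, apply_ops s G x y = apply_ops s G y x.
Proof. by elim: s G => //= o s IH G Gsym; apply/IH/apply_op_sym. Qed.

Section LocalComplement.
Variables (V : finType) (G : V -> V -> bool) (v : V).
Hypothesis Gsym : forall x y, G x y = G y x.
Local Notation G' := (apply_op (Ons v) G).
Local Notation beta := (op_map (Ons v) G).
Implicit Types (B D T : {set elt V}) (e x : elt V).

Definition label_Ons (w : V) (t : 'I_3) : 'I_3 :=
  if w == v then (if G v v then swapt tphi tchi t else swapt tphi tpsi t) else t.

Lemma op_map_Ons w t : beta (w, t) = (w, label_Ons w t).
Proof. by rewrite /label_Ons /=; case: (w == v) => //; case: (G v v). Qed.

Lemma label_OnsK w : involutive (label_Ons w).
Proof. by move=> t; rewrite /label_Ons; case: (w == v); case: (G v v); rewrite ?swaptK. Qed.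

Lemma op_map_OnsK : involutive beta.
Proof. by case=> w t; rewrite !op_map_Ons label_OnsK. Qed.

Lemma op_map_Ons_inj : injective beta.
Proof. exact: inv_inj op_map_OnsK. Qed.

(* The column of beta x in IAS(G_ns^v) is the column of x in IAS(G) plus its
   v-entry times the indicator of N(v): a row operation, so it preserves
   linear dependence. *)
Lemma iascol_Ons x u :
  iascol G' (beta x) u = iascol G x u (+) (iascol G x v && (u \in nbr G v)).
Proof.
have nbrE z : (z \in nbr G v) = (z != v) && G v z by rewrite inE.
case: x => w t; rewrite op_map_Ons /label_Ons.
case: (I3_cases t) => ->;
(have [->|wv] := eqVneq w v; [case Gvv: (G v v)|]) => /=; rewrite /iascol /= ?nbrE ?eqxx /=;
  have [->|uv] := eqVneq u v; rewrite /= ?eqxx ?Gvv /= ?(negbTE wv) /=.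
all: rewrite ?(Gsym u v) ?(Gsym w v) ?(Gsym u w) ?(eq_sym v w) ?(negbTE wv) ?Gvv /=.
all: rewrite ?andbF ?addbF ?addbb ?eqxx //.
all: by case: (G v u); case: (G v w); case: (G w u); case: (u == w).
Qed.

Lemma big_iascol_Ons D u :
  \big[addb/false]_(y in beta @: D) iascol G' y u =
  (\big[addb/false]_(x in D) iascol G x u) (+)
  ((\big[addb/false]_(x in D) iascol G x v) && (u \in nbr G v)).
Proof.
rewrite big_imset; last by move=> x y _ _; apply: op_map_Ons_inj.
under eq_bigr => x _ do rewrite iascol_Ons.
rewrite big_split /=; congr (_ (+) _).
case: (u \in nbr G v); first by under eq_bigr => x _ do rewrite andbT; rewrite andbT.
by rewrite andbF big1 // => x _; rewrite andbF.
Qed.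

Lemma zero_sum_Ons D : zero_sum G D <-> zero_sum G' (beta @: D).
Proof.
split => z u; first by rewrite big_iascol_Ons (z u) (z v).
have zv : \big[addb/false]_(x in D) iascol G x v = false.
  by move: (z v); rewrite big_iascol_Ons [v \in _]inE eqxx /= andbF addbF.
by move: (z u); rewrite big_iascol_Ons zv andFb addbF.
Qed.

Lemma imset_op_map_OnsK D : beta @: (beta @: D) = D.
Proof. by rewrite -imset_comp (eq_imset _ op_map_OnsK) imset_id. Qed.

Lemma dependent_Ons T : dependent G T <-> dependent G' (beta @: T).
Proof.
split=> [[D [DT D0 zD]] | [D [DT D0 zD]]].
  by exists (beta @: D); split; [exact: imsetS | rewrite imset_eq0 | apply/zero_sum_Ons].
exists (beta @: D); split.
- by rewrite -[T]imset_op_map_OnsK imsetS.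
- by rewrite imset_eq0.
- by apply/zero_sum_Ons; rewrite imset_op_map_OnsK.
Qed.

Lemma is_basis_Ons B : is_basis G B -> is_basis G' (beta @: B).
Proof.
move=> [indB maxB]; split; first by move/dependent_Ons.
move=> y yB; rewrite -(op_map_OnsK y) -imsetU1; apply/dependent_Ons/maxB.
by apply: contra yB => yB; rewrite -(op_map_OnsK y) imset_f.
Qed.

Lemma in_fund_Ons B e x : is_basis G B -> e \notin B ->
  in_fund G B e x <-> in_fund G' (beta @: B) (beta e) (beta x).
Proof.
move=> basB eB; have [S SB zS] := basis_zero_sum_setU1 basB eB.
have eB' : beta e \notin beta @: B by rewrite (mem_imset _ _ op_map_Ons_inj).
have zS' : zero_sum G' (beta e |: beta @: S) by rewrite -imsetU1; apply/zero_sum_Ons.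
apply: iff_trans (in_fundP basB.1 eB SB zS x) _.
apply: iff_trans _ (iff_sym (in_fundP (is_basis_Ons basB).1 eB' (imsetS _ SB) zS' (beta x))).
by rewrite -imsetU1 (mem_imset _ _ op_map_Ons_inj).
Qed.

End LocalComplement.

Section Reduction.
Variable V : finType.
Implicit Types (G : V -> V -> bool) (b c f : V -> 'I_3).

Lemma mem_transv f w t : ((w, t) \in transv f) = (t == f w).
Proof. by apply/imsetP/eqP => [[u _ [-> ->]] //|->]; exists w. Qed.

Lemma big_addb_eq (A : {set V}) u : \big[addb/false]_(u' in A) (u == u') = (u \in A).
Proof.
have [uA|uA] := boolP (u \in A); last first.
  by rewrite big1 // => u' u'A; apply: contraNF uA => /eqP ->.
rewrite (bigD1 u) //= eqxx big1 // => u' /andP[_ u'u].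
by rewrite eq_sym (negbTE u'u).
Qed.

Definition relabel_Ons G v f u := label_Ons G v u (f u).

Lemma transv_Ons G v f : op_map (Ons v) G @: transv f = transv (relabel_Ons G v f).
Proof. by rewrite -imset_comp; apply: eq_imset => u; exact: op_map_Ons. Qed.

Lemma relabel_Ons_neq G v b c : (forall u, b u != c u) ->
  forall u, relabel_Ons G v b u != relabel_Ons G v c u.
Proof. by move=> bc u; rewrite /relabel_Ons (inj_eq (inv_inj (label_OnsK G v u))). Qed.

Definition phi_reduction G b c := exists s : seq (op V),
  (forall v w, v != w -> apply_ops s G v w <-> in_fund G (transv b) (v, c v) (w, b w))
  /\ [set induced s G x | x in transv b] = Phi V.

Section Step.
Variables (G : V -> V -> bool) (b c : V -> 'I_3).
Hypotheses (Gsym : forall x y, G x y = G y x) (basB : is_basis G (transv b)).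
Hypothesis bc : forall v, b v != c v.

Lemma is_basis_relabel_Ons v :
  is_basis (apply_op (Ons v) G) (transv (relabel_Ons G v b)).
Proof. by rewrite -transv_Ons; apply: is_basis_Ons. Qed.

Lemma phi_reduction_Ons v :
  phi_reduction (apply_op (Ons v) G) (relabel_Ons G v b) (relabel_Ons G v c) ->
  phi_reduction G b c.
Proof.
move=> [s [fund_s Phi_s]]; exists (Ons v :: s); split => /=.
  move=> u w uw; apply: iff_trans (fund_s u w uw) _; apply: iff_sym.
  have cB : (u, c u) \notin transv b by rewrite mem_transv eq_sym.
  by have := in_fund_Ons v Gsym (w, b w) basB cB; rewrite transv_Ons !op_map_Ons.
by rewrite -Phi_s -transv_Ons -[RHS]imset_comp.
Qed.

(* For B = Phi the fundamental circuit of C(v) consists of C(v) and the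
   phi(u) with u in the support of its column; for w != v that support
   condition is just G v w. *)
Lemma phi_reduction_Phi : (forall v, b v = tphi) -> phi_reduction G b c.
Proof.
move=> bphi; exists [::]; split => /=; last first.
  by rewrite imset_id; apply: eq_imset => u; rewrite bphi.
move=> v w vw; set S := [set (u, tphi) | u in [set u | iascol G (v, c v) u]].
have cphi : c v != tphi by rewrite -(bphi v) eq_sym.
have SB : S \subset transv b by apply/subsetP => _ /imsetP[u _ ->]; rewrite mem_transv bphi.
have cB : (v, c v) \notin transv b by rewrite mem_transv eq_sym.
have zS : zero_sum G ((v, c v) |: S).
  move=> u; rewrite big_setU1 /=; last by apply: contra cphi => /imsetP[? _ [_ ->]].
  rewrite big_imset /=; last by move=> ? ? _ _ [].
  by rewrite (eq_bigr (fun u' => u == u')) // big_addb_eq inE addbb.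
apply: iff_sym; apply: iff_trans (in_fundP basB.1 cB SB zS (w, b w)) _.
have pair_inj : injective (fun u : V => (u, tphi)) by move=> ? ? [].
rewrite bphi in_setU1 xpair_eqE (eq_sym w) (negbTE vw) /S (mem_imset _ _ pair_inj) inE.
by case: (I3_cases (c v)) cphi => -> //= _; rewrite /iascol /= Gsym ?(eq_sym w) ?(negbTE vw) ?addbF.
Qed.

End Step.

Definition nonphi b := [set u | b u != tphi].

(* Local complementation at v moves B(v) to phi(v) exactly when v is ready. *)
Definition Ons_ready G b v :=
  ((b v == tchi) && G v v) || ((b v == tpsi) && ~~ G v v).

Lemma nonphi_relabel_Ons G b w : b w != tphi ->
  nonphi (relabel_Ons G w b) \subset nonphi b.
Proof.
move=> bw; apply/subsetP => u; rewrite !inE /relabel_Ons /label_Ons.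
by have [->|] := eqVneq u w.
Qed.

Lemma nonphi_relabel_Ons_ready G b v : Ons_ready G b v ->
  nonphi (relabel_Ons G v b) \subset nonphi b :\ v.
Proof.
move=> ready; apply/subsetP => u; rewrite !inE /relabel_Ons /label_Ons.
have [->|//] := eqVneq u v.
by case/orP: ready => /andP[/eqP -> Gvv]; move: Gvv; case: (G v v).
Qed.

(* A vertex v that is not ready has B(v) = chi(v) unlooped or psi(v) looped,
   whose column is the indicator of N(v): the sum of the columns phi(w),
   w in N(v). *)
Lemma not_ready_nonphi_nbr G b v : (forall x y, G x y = G y x) ->
  independent G (transv b) -> b v != tphi -> ~~ Ons_ready G b v ->
  exists2 w, w \in nbr G v & b w != tphi.
Proof.
move=> Gsym indB bv not_ready.
have [/existsP[w /andP[? ?]]|all_phi] := boolP [exists w, (w \in nbr G v) && (b w != tphi)].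
  by exists w.
case: indB; exists ((v, b v) |: [set (u, tphi) | u in nbr G v]); split.
- apply/subsetP => _ /setU1P[->|/imsetP[u un ->]]; rewrite mem_transv //.
  by apply: contraNT all_phi => bu; apply/existsP; exists u; rewrite un eq_sym.
- by apply/set0Pn; exists (v, b v); rewrite setU11.
- move=> u; rewrite big_setU1; last by apply: contra bv => /imsetP[? _ [_ ->]].
  rewrite big_imset; last by move=> ? ? _ _ [].
  rewrite (eq_bigr (fun u' => u == u')) // big_addb_eq inE.
  move: not_ready; rewrite /Ons_ready.
  case: (I3_cases (b v)) bv => -> // _; rewrite /iascol /=.
  all: have [->|uv] := eqVneq u v; rewrite ?eqxx /=; first by case: (G v v).
  all: by rewrite (Gsym u v); case: (G v u).
Qed.

(* Each round makes some vertex with a non-phi label ready and then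
   complements at it: if v is not ready it has a neighbour w with a non-phi
   label; either w is ready, or complementing at w (which keeps B(w) off phi)
   toggles the loop at v and makes v ready. *)
Lemma phi_reductionP G b c : (forall x y, G x y = G y x) ->
  is_basis G (transv b) -> (forall v, b v != c v) -> phi_reduction G b c.
Proof.
have [n] := ubnP #|nonphi b|; elim: n G b c => // n IH G b c.
rewrite ltnS => size_b Gsym basB bc.
have [/eqP|/set0Pn[v vN]] := boolP (nonphi b == set0).
  move=> /setP nonphi0; apply: phi_reduction_Phi => // u.
  by apply/eqP; move: (nonphi0 u); rewrite !inE => /negbFE.
have bv : b v != tphi by rewrite inE in vN.
have reduce_at z : z \in nonphi b -> Ons_ready G b z -> phi_reduction G b c.
  move=> zN ready; apply: (phi_reduction_Ons Gsym basB bc (v := z)).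
  apply: IH _ (apply_op_sym _ Gsym) (is_basis_relabel_Ons Gsym basB z)
    (relabel_Ons_neq G z bc).
  apply: leq_trans (proper_card _) size_b.
  exact: sub_proper_trans (nonphi_relabel_Ons_ready ready) (properD1 zN).
have [|not_ready_v] := boolP (Ons_ready G b v); first exact: reduce_at.
have [w wv bw] := not_ready_nonphi_nbr Gsym basB.1 bv not_ready_v.
have wN : w \in nonphi b by rewrite inE.
have [|not_ready_w] := boolP (Ons_ready G b w); first exact: reduce_at.
apply: (phi_reduction_Ons Gsym basB bc (v := w)).
have vw : (v == w) = false by apply: contraTF wv => /eqP ->; rewrite inE eqxx.
have vnbr : v \in nbr G w by move: wv; rewrite !inE eq_sym vw Gsym.
have ready_v : Ons_ready (apply_op (Ons w) G) (relabel_Ons G w b) v.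
  move: not_ready_v; rewrite /Ons_ready /relabel_Ons /label_Ons vw /= vnbr /=.
  by case: (I3_cases (b v)) bv => -> // _; case: (G v v).
have Gsym_w := apply_op_sym (Ons w) Gsym.
have basB_w := is_basis_relabel_Ons Gsym basB w.
have bc_w := relabel_Ons_neq G w bc.
apply: (phi_reduction_Ons Gsym_w basB_w bc_w (v := v)).
apply: IH _ (apply_op_sym _ Gsym_w) (is_basis_relabel_Ons Gsym_w basB_w v)
  (relabel_Ons_neq _ v bc_w).
apply: leq_trans (proper_card _) size_b; apply: sub_proper_trans (properD1 vN).
exact: subset_trans (nonphi_relabel_Ons_ready ready_v) (setSD _ (nonphi_relabel_Ons _ bw)).
Qed.

Lemma in_fund_transv_sym G b c : phi_reduction G b c ->
  (forall x y, G x y = G y x) -> forall v w, v != w ->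
  in_fund G (transv b) (v, c v) (w, b w) <-> in_fund G (transv b) (w, c w) (v, b v).
Proof.
move=> [s [fund_s _]] Gsym v w vw; apply: iff_trans (iff_sym (fund_s _ _ vw)) _.
by rewrite apply_ops_sym //; apply: fund_s; rewrite eq_sym.
Qed.

End Reduction.

Section Loops.
Variable V : finType.
Implicit Types (G : V -> V -> bool) (s t : seq (op V)).

Lemma apply_ops_cat s t G : apply_ops (s ++ t) G = apply_ops t (apply_ops s G).
Proof. by elim: s G => //= o s IH G; exact: IH. Qed.

Lemma induced_cat s t G x :
  induced (s ++ t) G x = induced t (apply_ops s G) (induced s G x).
Proof. by elim: s G x => //= o s IH G x; exact: IH. Qed.

Lemma apply_ops_Oloop (l : seq V) G x y : uniq l ->
  apply_ops (map (@Oloop V) l) G x y =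
  if (x == y) && (x \in l) then ~~ G x y else G x y.
Proof.
elim: l G => [|a l IH] G /=; first by rewrite andbF.
case/andP=> al ul; rewrite IH // in_cons /=.
have [<-|xy] := eqVneq x y => /=.
  by have [->|] := eqVneq x a; rewrite /= ?(negbTE al).
by move: xy; have [->|//] := eqVneq x a => ay; rewrite (eq_sym y) (negbTE ay).
Qed.

Lemma induced_Oloop_phi (l : seq V) G v :
  induced (map (@Oloop V) l) G (v, tphi) = (v, tphi).
Proof. by elim: l G => //= a l IH G; case: (v == a); apply: IH. Qed.

(* Loop toggles fix every phi(v), so they repair the diagonal for free. *)
Lemma phi_reduction_loops G b c (H : V -> V -> bool) : phi_reduction G b c ->
  (forall v w, v != w -> H v w <-> in_fund G (transv b) (v, c v) (w, b w)) ->
  exists s : seq (op V), (forall x y, apply_ops s G x y = H x y) /\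
    [set induced s G x | x in transv b] = Phi V.
Proof.
move=> [s [fund_s Phi_s]] fund_H.
set l := [seq u <- enum V | apply_ops s G u u != H u u].
have ul : uniq l by rewrite filter_uniq // enum_uniq.
exists (s ++ map (@Oloop V) l); split.
  move=> x y; rewrite apply_ops_cat apply_ops_Oloop // mem_filter mem_enum andbT.
  have [<-|xy] := eqVneq x y => /=.
    by case: (apply_ops s G x x); case: (H x x).
  by apply/idP/idP => [/(fund_s _ _ xy)/(fund_H _ _ xy)|/(fund_H _ _ xy)/(fund_s _ _ xy)].
transitivity [set induced (map (@Oloop V) l) (apply_ops s G) y | y in Phi V].
  by rewrite -Phi_s -[RHS]imset_comp; apply: eq_imset => x; exact: induced_cat.
rewrite -[RHS]imset_id; apply: eq_in_imset => _ /imsetP[u _ ->].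
exact: induced_Oloop_phi.
Qed.

End Loops.

Theorem corollary4p2 (V : finType) (G : V -> V -> bool)
  (HGsym : forall x y, G x y = G y x)
  (b c : V -> 'I_3)
  (Hb : is_basis G (transv b))
  (Hbc : forall v, b v != c v) :
  (forall v w : V, v != w ->
     (in_fund G (transv b) (v, c v) (w, b w) <->
      in_fund G (transv b) (w, c w) (v, b v)))
  /\
  (forall H : V -> V -> bool,
     (forall x y, H x y = H y x) ->
     (forall v w : V, v != w ->
        (H v w <-> in_fund G (transv b) (v, c v) (w, b w))) ->
     exists s : seq (op V),
       (forall x y, apply_ops s G x y = H x y) /\
       [set induced s G x | x in transv b] = Phi V).
Proof.
have red := phi_reductionP HGsym Hb Hbc.
split; first exact: in_fund_transv_sym red HGsym.
by move=> H _; apply: phi_reduction_loops red.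
Qed.
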